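(* Assume $\mathcal{R}(\Theta^* )\le r$, $\mathcal{R}^*(\Phi(x))\le d$ for all $x\in\mathcal{X}$, and $\|\Phi(x)\|_{\max}\le\phi_{\max}$ for all $x\in\mathcal{X}$. Let $\bar r>0$. Then for every $\Theta\in\mathbb{R}^{k_1\times k_2}$ with $\mathcal{R}(\Theta)\le\bar r$, the largest eigenvalue of the Hessian of $\mathcal{L}_n$ (viewed as a function of $\mathrm{vec}(\Theta)$) at $\Theta$ is at most $4k_1k_2\phi_{\max}^2\exp(2\bar rd)$; i.e. $\mathcal{L}_n$ is $4k_1k_2\phi_{\max}^2\exp(2\bar rd)$-smooth on $\{\Theta:\mathcal{R}(\Theta)\le\bar r\}$.
   Context: Let $\mathcal{X}\subset\mathbb{R}^p$ be a bounded set with finite positive volume and $\mathcal{U}_{\mathcal{X}}$ the uniform distribution on it. $\Phi:\mathcal{X}\to\mathbb{R}^{k_1\times k_2}$ is a natural statistic, $\langle\langle M,N\rangle\rangle=\sum_{i,j}M_{ij}N_{ij}$, $\mathcal{R}$ a norm on $\mathbb{R}^{k_1\times k_2}$ with dual norm $\mathcal{R}^*(M)=\sup\{\langle\langle M,N\rangle\rangle:\mathcal{R}(N)\le1\}$, $\|M\|_{\max}=\max_{ij}|M_{ij}|$, $r,d,\phi_{\max}$ constants, $\Theta^*$ the true parameter of the density $f_{\mathbf{x}}(x;\Theta)\propto\exp(\langle\langle\Theta,\Phi(x)\rangle\rangle)$ on $\mathcal{X}$. Given samples $x^{(1)},\dots,x^{(n)}\in\mathcal{X}$, $\tilde\Phi(x)=\Phi(x)-\mathbb{E}_{\mathcal{U}_{\mathcal{X}}}[\Phi]$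 and $\mathcal{L}_n(\Theta)=\frac1n\sum_{t=1}^n\exp(-\langle\langle\Theta,\tilde\Phi(x^{(t)})\rangle\rangle)$. *)

From HB Require Import structures.
From mathcomp Require Import all_boot all_order all_algebra.
From mathcomp Require Import all_classical all_reals all_analysis.
Set Implicit Arguments.
Unset Strict Implicit.
Unset Printing Implicit Defensive.
Import Order.TTheory GRing.Theory Num.Theory.
Import numFieldNormedType.Exports.
Local Open Scope classical_set_scope.
Local Open Scope ring_scope.

Section Defs.
Variable R : realType.

Definition frob {k1 k2 : nat} (M N : 'M[R]_(k1, k2)) : R :=
  \sum_(i < k1) \sum_(j < k2) M i j * N i j.

Definition maxnorm {k1 k2 : nat} (M : 'M[R]_(k1, k2)) : R :=
  \big[Num.max/0]_(i < k1) \big[Num.max/0]_(j < k2) `|M i j|.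

Definition is_norm {k1 k2 : nat} (N : 'M[R]_(k1, k2) -> R) : Prop :=
  [/\ forall M, 0 <= N M,
      forall M, N M = 0 -> M = 0,
      forall (a : R) M, N (a *: M) = `|a| * N M &
      forall M M', N (M + M') <= N M + N M'].

Definition dual_norm {k1 k2 : nat} (N : 'M[R]_(k1, k2) -> R)
    (M : 'M[R]_(k1, k2)) : R :=
  sup [set y : R | exists2 A, N A <= 1 & y = frob M A].

(** Iterated Lebesgue integral over R^p (points are p-tuples), i.e. the
    integral w.r.t. p-dimensional Lebesgue measure (Tonelli/Fubini). *)
Fixpoint iter_lebesgue_integral (p : nat) : (p.-tuple R -> \bar R) -> \bar R :=
  match p return (p.-tuple R -> \bar R) -> \bar R with
  | 0 => fun f => f [tuple]
  | p'.+1 => fun f =>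
      (\int[@lebesgue_measure R]_x
         iter_lebesgue_integral (fun t : p'.-tuple R => f (cons_tuple x t)))%E
  end.

Definition volume {p : nat} (X : set (p.-tuple R)) : \bar R :=
  iter_lebesgue_integral (fun x => (\1_X x)%:E).

Definition uniform_mean {p k1 k2 : nat} (X : set (p.-tuple R))
    (Phi : p.-tuple R -> 'M[R]_(k1, k2)) : 'M[R]_(k1, k2) :=
  \matrix_(i, j) (fine (iter_lebesgue_integral
                          (fun x => (\1_X x * Phi x i j)%:E))
                  / fine (volume X)).

Definition Phi_tilde {p k1 k2 : nat} (X : set (p.-tuple R))
    (Phi : p.-tuple R -> 'M[R]_(k1, k2)) (x : p.-tuple R) : 'M[R]_(k1, k2) :=
  Phi x - uniform_mean X Phi.

Definition Ln {p k1 k2 n : nat} (X : set (p.-tuple R))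
    (Phi : p.-tuple R -> 'M[R]_(k1, k2)) (xs : 'I_n -> p.-tuple R)
    (Theta : 'M[R]_(k1, k2)) : R :=
  n%:R^-1 * \sum_(t < n) expR (- frob Theta (Phi_tilde X Phi (xs t))).

Definition hessian {m : nat} (f : 'rV[R]_m -> R) (v : 'rV[R]_m) : 'M[R]_m :=
  \matrix_(a, b) ('D_(delta_mx 0 a) ('D_(delta_mx 0 b) f) v).

End Defs.

From HB Require Import structures.
From mathcomp Require Import all_boot all_order all_algebra.
From mathcomp Require Import all_classical all_reals all_analysis.
From mathcomp Require Import measurable_realfun ring lra.
Import Order.TTheory GRing.Theory Num.Theory.
Import numFieldNormedType.Exports.
Local Open Scope classical_set_scope.
Local Open Scope ring_scope.

(** The Hessian of [L_n] at [Theta] is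
    [(1/n) \sum_t exp (- <<Theta, Phi~_t>>) vec(Phi~_t) vec(Phi~_t)^T], so an eigenvalue is a
    Rayleigh quotient [(1/n) \sum_t exp (- <<Theta, Phi~_t>>) <u, vec Phi~_t>^2 / |u|^2].
    By Cauchy-Schwarz each square is at most [k1 k2 (2 phi_max)^2 |u|^2], because the
    uniform mean of [Phi] is an average of matrices with entries bounded by [phi_max].
    The Hoelder inequality [|<<Theta, M>>| <= R(Theta) R^*(M)], applied to [Phi(x)] and
    to its uniform mean, bounds each weight by [exp (2 rbar d)].
    The uniform mean is defined through iterated Lebesgue integrals; to use linearity and
    monotonicity of the integral, these are identified with integrals against a single
    sigma-finite measure on [p]-tuples, the pushforward of [lebesgue_measure \x mu] along
    [cons_tuple]. *)

Section bounded_support.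
Context {d} {T : measurableType d} {R : realType} (mu : {measure set T -> \bar R}).

Lemma integrable_bounded_support {A : set T} {f : T -> R} {M : R} :
  measurable A -> (mu A < +oo)%E -> measurable_fun setT f ->
  (forall x, `|f x| <= M) -> (forall x, ~ A x -> f x = 0) ->
  mu.-integrable setT (EFin \o f).
Proof.
move=> mA muA mf fM f0.
have intA : mu.-integrable A (EFin \o f).
  apply: measurable_bounded_integrable => //; first exact: measurable_funTS.
  by exists M; split; [exact: num_real | move=> N MN x _; apply: le_trans (ltW MN)].
move/(integrable_mkcond _ mA): intA; apply: eq_integrable => // x _.
by rewrite /patch; case: ifPn => // /negP; rewrite inE => /f0 /= ->.
Qed.

Lemma Rintegral_sum (D : set T) I (r : seq I) (F : I -> T -> R) :
  measurable D -> (forall i, mu.-integrable D (EFin \o F i)) ->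
  \int[mu]_(x in D) (\sum_(i <- r) F i x) = \sum_(i <- r) \int[mu]_(x in D) F i x.
Proof.
move=> mD intF; rewrite /Rintegral.
under eq_integral do rewrite -sumEFin.
rewrite integral_sum // -EFin_sum_fine // => i _.
by apply: integrable_fin_num => //; exact: intF.
Qed.

End bounded_support.

Section box.
Context {R : realType}.

Definition box p (B : R) : set (p.-tuple R) := [set x | forall i, `|tnth x i| <= B].

Lemma box_measurable p B : measurable (box p B).
Proof.
have -> : box p B = \bigcap_(i in [set: 'I_p]) ((fun x => tnth x i) @^-1` `[-B, B]).
  by apply/seteqP; split => x /= h i; [move=> _|have := h i I];
    rewrite /= in_itv /= -ler_norml; [exact: h|].
apply: fin_bigcap_measurable; first exact: finite_finset.
by move=> i _; rewrite -[_ @^-1` _]setTI; exact: measurable_tnth.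
Qed.

Definition boxed {p} (f : p.-tuple R -> R) :=
  [/\ measurable_fun setT f, exists M, forall x, `|f x| <= M &
      exists B, forall x, ~ box p B x -> f x = 0].

Lemma boxed_cons p (f : p.+1.-tuple R -> R) (x : R) :
  boxed f -> boxed (fun t => f (cons_tuple x t)).
Proof.
case=> mf [M fM] [B fB]; split; [|by exists M|exists B => t tB].
  apply: measurableT_comp mf _.
  exact: (@measurable_cons _ _ (p.-tuple R) R (cst x) p id).
by apply: fB => /(_ (lift ord0 _)) h; apply: tB => i; have := h i; rewrite tnthS.
Qed.

End box.

Section cons_measure.
Context {R : realType} {p : nat} (mu : {sigma_finite_measure set (p.-tuple R) -> \bar R}).

Definition cons_pair (z : measurableTypeR R * p.-tuple R) : p.+1.-tuple R :=
  cons_tuple z.1 z.2.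

Lemma measurable_cons_pair : measurable_fun setT cons_pair.
Proof. exact: (@measurable_cons _ _ (measurableTypeR R * p.-tuple R)%type R fst p snd). Qed.

Definition cons_measure := pushforward (@lebesgue_measure R \x mu)%E cons_pair.

(* The library's measure instance on [pushforward] takes the measurability of the map
   as an argument, so it cannot be found by inference. *)
HB.instance Definition _ := Measure.copy cons_measure
  (measure_function_pushforward__canonical__measure_function_Measure _ measurable_cons_pair).

Lemma preimage_cons_pair_box B : cons_pair @^-1` box p.+1 B = `[-B, B]%classic `*` box p B.
Proof.
apply/seteqP; split => -[x t] /=.
  move=> h; split; first by have := h ord0; rewrite /= in_itv /= -ler_norml (tnth_nth 0).
  by move=> i; have := h (lift ord0 i); rewrite tnthS.
move=> [hx ht] i; case: (unliftP ord0 i) => [j ->|->]; first by rewrite tnthS.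
by move: hx; rewrite /= in_itv /= -ler_norml (tnth_nth 0).
Qed.

Lemma cons_measure_box_lty B : (mu (box p B) < +oo)%E -> (cons_measure (box p.+1 B) < +oo)%E.
Proof.
move=> muB; rewrite /cons_measure /pushforward preimage_cons_pair_box.
rewrite product_measure1E //; last exact: box_measurable.
rewrite lte_mul_pinfty //.
suff : (@lebesgue_measure R [set` `[-B, B]%R]) \is a fin_num by [].
by rewrite lebesgue_measure_itv /=; case: ifP.
Qed.

End cons_measure.

Lemma box_finite_sigma_finite {R : realType} {p} (mu : {measure set (p.-tuple R) -> \bar R}) :
  (forall B, (mu (box p B) < +oo)%E) -> sigma_finite setT mu.
Proof.
move=> mu_box; exists (fun k => box p k%:R); last first.
  by move=> k; split; [exact: box_measurable | exact: mu_box].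
apply/seteqP; split => // x _.
pose M := \big[Num.max/0]_i `|tnth x i|.
have M0 : 0 <= M := bigmax_ge_id _ _ _ _.
exists (Num.bound M) => //= i.
apply: le_trans (ltW (archi_boundP M0)).
exact: (le_bigmax _ (fun i => `|tnth x i|)).
Qed.

Section iterated_integral.
Context {R : realType}.

Lemma integral_cons_measure p (mu : {sigma_finite_measure set (p.-tuple R) -> \bar R})
    (f : p.+1.-tuple R -> R) :
  (forall B, (mu (box p B) < +oo)%E) -> boxed f ->
  (\int[cons_measure mu]_y (f y)%:E =
   \int[@lebesgue_measure R]_x \int[mu]_t (f (cons_tuple x t))%:E)%E.
Proof.
move=> mu_box fbox; have [mf [M fM] [B fB]] := fbox.
have int_cons : (@lebesgue_measure R \x mu)%E.-integrable setT (EFin \o (f \o cons_pair)).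
  apply: (integrable_bounded_support _ (A := cons_pair @^-1` box p.+1 B)).
  - by rewrite -[X in measurable X]setTI; apply: measurable_cons_pair => //; exact: box_measurable.
  - exact: cons_measure_box_lty.
  - exact: measurableT_comp mf measurable_cons_pair.
  - by move=> z; exact: fM.
  - by move=> z /fB.
rewrite (integral12_prod_meas1 int_cons).
rewrite (integral_pushforward measurable_cons_pair _ int_cons) ?preimage_setT //.
exact/measurable_EFinP.
Qed.

Lemma iter_lebesgue_integral_boxed p :
  exists mu : {sigma_finite_measure set (p.-tuple R) -> \bar R},
    (forall B, (mu (box p B) < +oo)%E) /\
    forall f, boxed f -> iter_lebesgue_integral (EFin \o f) = (\int[mu]_x (f x)%:E)%E.
Proof.
elim: p => [|p [mu [mu_box IH]]].
  exists (\d_([tuple] : 0.-tuple R)); split => [B|f [mf _ _]]; first by rewrite /= diracE ltry.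
  rewrite integral_dirac //; last exact/measurable_EFinP.
  by rewrite diracT mul1e.
have nu_box B := cons_measure_box_lty mu B (mu_box B).
pose nu := HB.pack_for (SigmaFiniteMeasure.type _ R) (cons_measure mu)
  (Measure_isSigmaFinite.Build _ _ _ (cons_measure mu) (box_finite_sigma_finite _ nu_box)).
exists nu; split => // f fbox.
rewrite integral_cons_measure //=; apply: eq_integral => x _.
by rewrite -IH //; exact: boxed_cons.
Qed.

End iterated_integral.

Lemma boxed_indicM {R : realType} {p} {X : set (p.-tuple R)} {g : p.-tuple R -> R} {B M : R} :
  measurable X -> X `<=` box p B -> measurable_fun X g ->
  (forall x, X x -> `|g x| <= M) -> boxed (fun x => \1_X x * g x).
Proof.
move=> mX XB mg gM.
have gXE : (fun x => \1_X x * g x) = g \_ X.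
  by apply/funext => x; rewrite /patch indicE; case: ifP; rewrite (mul1r, mul0r).
split; first by rewrite gXE; exact/(measurable_restrictT _ mX).
  exists `|M| => x; rewrite indicE; case: (boolP (x \in X)) => [/set_mem xX|_].
    by rewrite mul1r (le_trans (gM x xX)) ?ler_norm.
  by rewrite mul0r normr0.
by exists B => x xB; rewrite indicE memNset ?mul0r // => /XB.
Qed.

Section frobenius.
Context {R : realType} {k1 k2 : nat}.
Implicit Types A B M : 'M[R]_(k1, k2).

Lemma frobC A B : frob A B = frob B A.
Proof. by apply: eq_bigr => i _; apply: eq_bigr => j _; rewrite mulrC. Qed.

Lemma frob_pair A B : frob A B = \sum_(ij : 'I_k1 * 'I_k2) A ij.1 ij.2 * B ij.1 ij.2.
Proof. by rewrite /frob pair_bigA. Qed.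

Lemma frob0l M : frob 0 M = 0.
Proof. by rewrite /frob big1 // => i _; rewrite big1 // => j _; rewrite mxE mul0r. Qed.

Lemma frob0r M : frob M 0 = 0.
Proof. by rewrite frobC frob0l. Qed.

Lemma frobBr A B M : frob A (B - M) = frob A B - frob A M.
Proof.
rewrite /frob -sumrB; apply: eq_bigr => i _; rewrite -sumrB.
by apply: eq_bigr => j _; rewrite !mxE mulrBr.
Qed.

Lemma frobZr A B (c : R) : frob A (c *: B) = c * frob A B.
Proof.
rewrite /frob mulr_sumr; apply: eq_bigr => i _; rewrite mulr_sumr.
by apply: eq_bigr => j _; rewrite mxE mulrCA.
Qed.

Lemma frobNl A B : frob (- A) B = - frob A B.
Proof.
rewrite /frob -sumrN; apply: eq_bigr => i _; rewrite -sumrN.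
by apply: eq_bigr => j _; rewrite mxE mulNr.
Qed.

Lemma frob_deltal i j M : frob (delta_mx i j) M = M i j.
Proof.
rewrite /frob (bigD1 i) //= (bigD1 j) //= !mxE !eqxx mul1r.
rewrite big1 => [|j' j'j]; last by rewrite mxE (negbTE j'j) andbF mul0r.
rewrite big1 ?addr0 // => i' i'i; apply: big1 => j' _.
by rewrite mxE (negbTE i'i) mul0r.
Qed.

Lemma mx_entry_le_maxnorm M i j :
  `|M i j| <= maxnorm M.
Proof.
apply: le_trans (le_bigmax _ (fun i => \big[Num.max/0]_j `|M i j|) i).
exact: (le_bigmax _ (fun j => `|M i j|) j).
Qed.

End frobenius.

Section uniform_mean.
Context {R : realType} {p k1 k2 : nat} {X : set (p.-tuple R)}
  {Phi : p.-tuple R -> 'M[R]_(k1, k2)} {K : R}.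
Hypotheses (mX : measurable X) (X_bounded : exists B, X `<=` box p B)
  (volX_gt0 : (0 < volume X)%E)
  (mPhi : forall i j, measurable_fun X (fun x => Phi x i j))
  (Phi_bounded : forall x, X x -> forall i j, `|Phi x i j| <= K).

Lemma uniform_mean_Rintegral : exists2 mu : {measure set (p.-tuple R) -> \bar R},
  (0 < mu X < +oo)%E &
  forall i j, uniform_mean X Phi i j = (\int[mu]_(x in X) Phi x i j) / fine (mu X).
Proof.
have [mu [mu_box iterE]] := iter_lebesgue_integral_boxed (R := R) p.
have [B XB] := X_bounded.
have iter_indicM (g : p.-tuple R -> R) M : measurable_fun X g -> (forall x, X x -> `|g x| <= M) ->
    iter_lebesgue_integral (fun x => (\1_X x * g x)%:E) = (\int[mu]_(x in X) (g x)%:E)%E.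
  move=> mg gM; rewrite (iterE _ (boxed_indicM mX XB mg gM)) [RHS]integral_mkcond.
  by apply: eq_integral => x _; rewrite /patch indicE; case: ifP; rewrite (mul1r, mul0r).
have volE : volume X = mu X.
  rewrite /volume (_ : (fun x => _) = fun x => (\1_X x * cst 1 x)%:E); last first.
    by apply/funext => x; rewrite mulr1.
  rewrite (iter_indicM _ 1) /= ?integral_cst ?mul1e // => x _.
  by rewrite normr1.
have muX : (0 < mu X < +oo)%E.
  rewrite -volE volX_gt0 /= volE.
  apply: le_lt_trans (mu_box B); apply: le_measure XB; rewrite inE //.
  exact: box_measurable.
exists mu => // i j.
rewrite /uniform_mean mxE (iter_indicM _ K) //; last by move=> x /Phi_bounded.
by congr (_ / fine _); exact: volE.
Qed.

Lemma frob_uniform_mean_le A c :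
  (forall x, X x -> frob A (Phi x) <= c) -> frob A (uniform_mean X Phi) <= c.
Proof.
move=> Ac; have [mu /andP[muX_gt0 muX_fin] meanE] := uniform_mean_Rintegral.
have intX (f : p.-tuple R -> R) M : measurable_fun X f ->
    (forall x, X x -> `|f x| <= M) -> mu.-integrable X (EFin \o f).
  move=> mf fM; apply: measurable_bounded_integrable => //.
  exists M; split; first exact: num_real.
  by move=> N MN x /fM /le_trans; apply; exact: ltW.
have intAPhi (ij : 'I_k1 * 'I_k2) :
    mu.-integrable X (EFin \o (fun x => A ij.1 ij.2 * Phi x ij.1 ij.2)).
  apply: (intX _ (`|A ij.1 ij.2| * K)); first exact: measurable_funM.
  by move=> x Xx; rewrite normrM ler_wpM2l ?Phi_bounded.
have V_gt0 : 0 < fine (mu X) by apply: fine_gt0; rewrite muX_gt0.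
have -> : frob A (uniform_mean X Phi) = (\int[mu]_(x in X) frob A (Phi x)) / fine (mu X).
  under eq_Rintegral do rewrite frob_pair.
  rewrite Rintegral_sum // frob_pair mulr_suml.
  apply: eq_bigr => -[i j] _ /=.
  rewrite meanE RintegralZl ?mulrA //.
  by apply: (intX _ K (mPhi i j)) => x /Phi_bounded.
have intfrob : mu.-integrable X (EFin \o (fun x => frob A (Phi x))).
  apply: eq_integrable (integrable_sum _ _ (fun ij _ => intAPhi ij)) => // x _.
  by rewrite /= frob_pair sumEFin.
rewrite ler_pdivrMr // -Rintegral_cst //.
by apply: le_Rintegral => //; apply: (intX _ `|c|).
Qed.

Lemma normr_frob_uniform_mean_le A c :
  (forall x, X x -> `|frob A (Phi x)| <= c) -> `|frob A (uniform_mean X Phi)| <= c.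
Proof.
move=> Ac; have A_c x : X x -> - c <= frob A (Phi x) <= c by move/Ac; rewrite ler_norml.
rewrite ler_norml; apply/andP; split.
  rewrite lerNl -frobNl; apply: frob_uniform_mean_le => x /A_c/andP[+ _].
  by rewrite frobNl lerNl.
by apply: frob_uniform_mean_le => x /A_c/andP[].
Qed.

Lemma uniform_mean_entry_le i j : `|uniform_mean X Phi i j| <= K.
Proof.
rewrite -frob_deltal normr_frob_uniform_mean_le // => x Xx.
by rewrite frob_deltal Phi_bounded.
Qed.

Lemma Phi_tilde_entry_le x i j : X x -> `|Phi_tilde X Phi x i j| <= 2 * K.
Proof.
move=> Xx; rewrite /Phi_tilde 2!mxE.
have := ler_normB (Phi x i j) (uniform_mean X Phi i j).
have := Phi_bounded x Xx i j; have := uniform_mean_entry_le i j; lra.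
Qed.

Lemma normr_frob_Phi_tilde_le A c x : X x ->
  (forall y, X y -> `|frob A (Phi y)| <= c) -> `|frob A (Phi_tilde X Phi x)| <= 2 * c.
Proof.
move=> Xx Ac; rewrite /Phi_tilde frobBr.
have := ler_normB (frob A (Phi x)) (frob A (uniform_mean X Phi)).
have := Ac x Xx; have := normr_frob_uniform_mean_le A c Ac; lra.
Qed.

End uniform_mean.

Lemma lipschitz_continuous {R : realType} {V : normedModType R} {g : V -> R} {K : R} :
  0 <= K -> (forall u v, `|g u - g v| <= K * `|u - v|) -> continuous g.
Proof.
move=> K0 gK x; apply/cvgrPdist_lt => e e0.
have K1 : 0 < K + 1 by rewrite ltr_wpDl.
near=> y; apply: le_lt_trans (gK x y) _.
have xy : `|x - y| < e / (K + 1).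
  by near: y; apply/nbhs_normP; exists (e / (K + 1)) => /=; rewrite ?divr_gt0.
apply: le_lt_trans (ler_wpM2l K0 (ltW xy)) _.
by rewrite mulrA ltr_pdivrMr // mulrDr mulr1 mulrC ltrDl.
Unshelve. all: by end_near.
Qed.

Lemma mx_entry_le_norm {R : realType} m n (A : 'M[R]_(m, n)) i j : `|A i j| <= `|A|.
Proof.
rewrite [`|A|]mx_normrE.
exact: (@le_bigmax _ _ _ 0 (fun ij => `|A ij.1 ij.2|) (i, j)).
Qed.

Section norm_and_dual.
Context {R : realType} {k1 k2 : nat} {Rn : 'M[R]_(k1, k2) -> R} (Rn_norm : is_norm Rn).
Implicit Types A M : 'M[R]_(k1, k2).

Let Rn_ge0 A : 0 <= Rn A. Proof. by case: Rn_norm. Qed.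
Let Rn_eq0 A : Rn A = 0 -> A = 0. Proof. by case: Rn_norm => _ + _ _; apply. Qed.
Let RnZ (a : R) A : Rn (a *: A) = `|a| * Rn A. Proof. by case: Rn_norm. Qed.
Let RnD A M : Rn (A + M) <= Rn A + Rn M. Proof. by case: Rn_norm. Qed.

Let Rn0 : Rn 0 = 0.
Proof. by rewrite -(scale0r 0) RnZ normr0 mul0r. Qed.

Let RnN A : Rn (- A) = Rn A.
Proof. by rewrite -scaleN1r RnZ normrN1 mul1r. Qed.

Let Rn_sum I (r : seq I) (F : I -> 'M[R]_(k1, k2)) :
  Rn (\sum_(i <- r) F i) <= \sum_(i <- r) Rn (F i).
Proof.
elim: r => [|a r IH]; first by rewrite !big_nil Rn0.
by rewrite !big_cons (le_trans (RnD _ _)) ?lerD.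
Qed.

Let Rn_vec_lipschitz :
  exists2 K, 0 <= K & forall u v, `|Rn (vec_mx u) - Rn (vec_mx v)| <= K * `|u - v|.
Proof.
pose K := \sum_(k < k1 * k2) Rn (vec_mx (delta_mx 0 k : 'rV[R]_(k1 * k2))).
have Rn_vec_le w : Rn (vec_mx w) <= K * `|w|.
  rewrite {1}(row_sum_delta w) linear_sum /= (le_trans (Rn_sum _ _ _)) //.
  rewrite /K mulr_suml; apply: ler_sum => k _.
  by rewrite linearZ /= RnZ mulrC ler_wpM2l ?mx_entry_le_norm.
have tri u v : Rn (vec_mx u) <= Rn (vec_mx v) + K * `|u - v|.
  have := RnD (vec_mx v) (vec_mx (u - v)); rewrite [vec_mx v + _]addrC -linearD subrK.
  by move/le_trans; apply; rewrite lerD2l Rn_vec_le.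
exists K => [|u v]; first by apply: sumr_ge0 => k _.
have := tri u v; have := tri v u; rewrite distrC => h1 h2.
rewrite ler_norml; apply/andP; split; lra.
Qed.

(* [Rn] is continuous, hence attains a positive minimum on the compact unit sphere. *)
Let Rn_vec_sphere_ge : (0 < k1 * k2)%N ->
  exists2 m, 0 < m & forall w : 'rV[R]_(k1 * k2), `|w| = 1 -> m <= Rn (vec_mx w).
Proof.
move=> N_gt0; pose S := [set w : 'rV[R]_(k1 * k2) | `|w| = 1].
have S0 : S !=set0.
  pose one : 'rV[R]_(k1 * k2) := const_mx 1.
  have one_neq0 : one != 0.
    apply/negP => /eqP/matrixP/(_ 0 (Ordinal N_gt0)); rewrite !mxE => /eqP.
    by rewrite oner_eq0.
  exists (`|one|^-1 *: one).
  by rewrite /S /= normrZ normfV normr_id mulVf ?normr_eq0.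
have S_compact : compact S.
  apply: bounded_closed_compact.
    by exists 1; split => [|M M1 w /= ->]; [exact: num_real | exact: ltW].
  have -> : S = (@Num.norm _ _) @^-1` [set 1] by [].
  exact: (continuous_closedP _).1 (@norm_continuous _ _) _ (@closed_eq R 1).
have [K K0 RnK] := Rn_vec_lipschitz.
have [c Sc cmin] := compact_EVT_min S0 S_compact
  (continuous_subspaceT (lipschitz_continuous K0 RnK)).
have c1 : `|c| = 1 by move: Sc; rewrite inE.
exists (Rn (vec_mx c)) => [|w w1]; last by apply: cmin; rewrite inE.
rewrite lt_def Rn_ge0 andbT; apply/eqP => /Rn_eq0/(congr1 mxvec).
by rewrite vec_mxK linear0 => c0; move: c1; rewrite c0 normr0 => /eqP; rewrite eq_sym oner_eq0.
Qed.

Lemma mx_entry_le_mul_norm : exists2 C, 0 <= C & forall A i j, `|A i j| <= C * Rn A.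
Proof.
have [N0|N_gt0] := posnP (k1 * k2).
  by exists 0 => // A i j; case: (mxvec_index i j) => m; rewrite N0.
have [m m_gt0 mRn] := Rn_vec_sphere_ge N_gt0.
exists m^-1 => [|A i j]; first by rewrite invr_ge0 ltW.
have [A0|A0] := eqVneq (mxvec A) 0.
  have -> : A = 0 by rewrite -(mxvecK A) A0 linear0.
  by rewrite mxE normr0 mulr_ge0 // invr_ge0 ltW.
have A_gt0 : 0 < `|mxvec A| by rewrite normr_gt0.
have := mRn (`|mxvec A|^-1 *: mxvec A).
rewrite normrZ normfV normr_id mulVf ?gt_eqF // => /(_ erefl).
rewrite linearZ /= RnZ mxvecK normfV normr_id => mA.
rewrite -mxvecE (le_trans (mx_entry_le_norm _ _ _ _ _)) // mulrC ler_pdivlMr //.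
by rewrite -ler_pdivlMl.
Qed.

(* [dual_norm] is a [sup], which is only meaningful on a set bounded from above; the
   equivalence of [Rn] with the entrywise norm provides the bound. *)
Lemma frob_le_dual_norm M A : Rn A <= 1 -> frob M A <= dual_norm Rn M.
Proof.
move=> A1; have [C C0 CRn] := mx_entry_le_mul_norm.
apply: sup_upper_bound; last by exists A.
split; first by exists (frob M 0), 0; rewrite ?Rn0.
exists (\sum_i \sum_j `|M i j| * C) => _ [B B1 ->].
apply: ler_sum => i _; apply: ler_sum => j _.
rewrite (le_trans (ler_norm _)) // normrM ler_wpM2l //.
by rewrite (le_trans (CRn _ _ _)) // ler_piMr.
Qed.

Lemma dual_norm_ge0 M : 0 <= dual_norm Rn M.
Proof.
by have := frob_le_dual_norm M 0; rewrite Rn0 ler01 frob0r; apply.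
Qed.

Lemma normr_frob_le A M : `|frob A M| <= Rn A * dual_norm Rn M.
Proof.
have [->|A0] := eqVneq A 0.
  by rewrite Rn0 mul0r frob0l normr0.
have RnA_gt0 : 0 < Rn A by rewrite lt_def Rn_ge0 andbT; apply: contra_neq A0 => /Rn_eq0.
have frob_le B : Rn B = Rn A -> frob M B <= Rn A * dual_norm Rn M.
  move=> BA; rewrite -ler_pdivrMl // -frobZr; apply: frob_le_dual_norm.
  by rewrite RnZ BA ger0_norm ?invr_ge0 ?Rn_ge0 // mulVf ?gt_eqF.
rewrite frobC ler_norml frob_le // andbT lerNl.
by rewrite -mulN1r -frobZr scaleN1r frob_le ?RnN.
Qed.

End norm_and_dual.

Lemma derive_along {R : realType} {V W : normedModType R} (f : V -> W) x v :
  'D_v f x = 'D_1 (fun h : R => f (h *: v + x)) 0.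
Proof.
rewrite /derive; set g1 := fun h => h^-1 *: _; set g2 := fun h => h^-1 *: _.
suff -> : g1 = g2 by [].
by apply/funext => h; rewrite /g1 /g2 /= addr0 scale0r add0r [_%:A]mulr1.
Qed.

Lemma is_derive_sum_expR_affine {R : realType} {n} (c a b : 'I_n -> R) :
  is_derive (0 : R) 1 (fun h : R => \sum_t c t * expR (a t * h + b t))
    (\sum_t c t * (a t * expR (b t))).
Proof.
have -> : (fun h : R => \sum_t c t * expR (a t * h + b t)) =
    \sum_t (fun h => c t * expR (a t * h + b t)).
  by apply/funext => h; rewrite fct_sumE.
apply: is_derive_eq; apply: eq_bigr => t _.
by rewrite mulr0 add0r addr0 [_%:A]mulr1 mulrC.
Qed.

Section exp_sum.
Context {R : realType} {m1 m2 n : nat}.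
Implicit Types (P : 'M[R]_(m1, m2)) (w e : 'rV[R]_(m1 * m2)).

Definition frob_vec P w := frob (vec_mx w) P.

Lemma frob_vec_line P (h : R) e w :
  frob_vec P (h *: e + w) = h * frob_vec P e + frob_vec P w.
Proof.
rewrite /frob_vec /frob linearD linearZ /= mulr_sumr -big_split /=.
apply: eq_bigr => i _; rewrite mulr_sumr -big_split /=.
by apply: eq_bigr => j _; rewrite !mxE mulrDl mulrA.
Qed.

Lemma frob_vec_delta P a : frob_vec P (delta_mx 0 a) = mxvec P 0 a.
Proof. by case/mxvec_indexP: a => i j; rewrite /frob_vec vec_mx_delta frob_deltal mxvecE. Qed.

Definition exp_sum (c : 'I_n -> R) (Ps : 'I_n -> 'M[R]_(m1, m2)) w :=
  \sum_t c t * expR (- frob_vec (Ps t) w).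

Lemma is_derive_exp_sum c (Ps : 'I_n -> 'M[R]_(m1, m2)) w e :
  is_derive w e (exp_sum c Ps)
    (\sum_t c t * (- frob_vec (Ps t) e * expR (- frob_vec (Ps t) w))).
Proof.
have line : (fun h : R => exp_sum c Ps (h *: e + w)) =
    (fun h => \sum_t c t * expR (- frob_vec (Ps t) e * h - frob_vec (Ps t) w)).
  apply/funext => h; apply: eq_bigr => t _.
  by rewrite frob_vec_line opprD mulNr [_ * h]mulrC.
have [Dline Dline_val] := is_derive_sum_expR_affine c
  (fun t => - frob_vec (Ps t) e) (fun t => - frob_vec (Ps t) w).
split; first by apply/derivable1P; rewrite line.
by rewrite derive_along line.
Qed.

Lemma derive_exp_sum c (Ps : 'I_n -> 'M[R]_(m1, m2)) e :
  'D_e (exp_sum c Ps) = exp_sum (fun t => c t * - frob_vec (Ps t) e) Ps.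
Proof.
apply/funext => w; have [_ ->] := is_derive_exp_sum c Ps w e.
by apply: eq_bigr => t _; rewrite mulrA.
Qed.

Lemma hessian_exp_sum c (Ps : 'I_n -> 'M[R]_(m1, m2)) w a b :
  hessian (exp_sum c Ps) w a b =
  \sum_t c t * expR (- frob_vec (Ps t) w) * (mxvec (Ps t) 0 a * mxvec (Ps t) 0 b).
Proof.
rewrite /hessian mxE derive_exp_sum.
have [_ ->] := is_derive_exp_sum (fun t => c t * - frob_vec (Ps t) (delta_mx 0 b)) Ps w
  (delta_mx 0 a).
by apply: eq_bigr => t _; rewrite !frob_vec_delta; ring.
Qed.

End exp_sum.

Section gram_eigenvalue.
Context {R : realType}.

Lemma sqr_sum_le N (z : 'I_N -> R) : (\sum_a z a) ^+ 2 <= N%:R * \sum_a z a ^+ 2.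
Proof.
rewrite expr2 mulr_suml.
apply: (@le_trans _ _ (\sum_a \sum_b ((z a ^+ 2 + z b ^+ 2) / 2))).
  apply: ler_sum => a _; rewrite mulr_sumr; apply: ler_sum => b _.
  have := sqr_ge0 (z a - z b); lra.
under eq_bigr do rewrite -mulr_suml big_split /= sumr_const card_ord.
rewrite -mulr_suml big_split /= sumr_const card_ord.
rewrite (_ : \sum_(i < N) z i ^+ 2 *+ N = N%:R * \sum_a z a ^+ 2); last first.
  by rewrite mulr_sumr; apply: eq_bigr => i _; rewrite mulr_natl.
rewrite -mulr_natl; lra.
Qed.

Lemma sqr_dot_le N (u : 'rV[R]_N) (l : 'I_N -> R) K :
  (forall a, `|l a| <= K) -> (\sum_a u 0 a * l a) ^+ 2 <= N%:R * K ^+ 2 * \sum_a u 0 a ^+ 2.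
Proof.
move=> lK; apply: le_trans (sqr_sum_le _ _) _.
rewrite -mulrA ler_wpM2l // mulr_sumr; apply: ler_sum => a _.
rewrite exprMn mulrC ler_wpM2r ?sqr_ge0 // -real_normK ?num_real //.
by rewrite lerXn2r ?nnegrE ?normr_ge0 // (le_trans _ (lK a)) ?(le_trans (normr_ge0 _) (lK a)).
Qed.

Lemma eigenvalue_gram_le N n (H : 'M[R]_N) (wt : 'I_n -> R) (l : 'I_n -> 'I_N -> R)
    K W lam :
  (forall a b, H a b = \sum_t wt t * (l t a * l t b)) ->
  (forall t, 0 <= wt t <= W) -> (forall t a, `|l t a| <= K) ->
  eigenvalue H lam -> lam <= n%:R * N%:R * K ^+ 2 * W.
Proof.
move=> HE wtW lK /eigenvalueP [u uH u0].
pose s := \sum_a u 0 a ^+ 2.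
have s_gt0 : 0 < s.
  have [a ua] : exists a, u 0 a != 0.
    apply/existsP; apply: contraNT u0 => /existsPn u0; apply/eqP/rowP => a.
    by rewrite mxE; apply/eqP; have := u0 a; rewrite negbK.
  rewrite /s (bigD1 a) //= ltr_pwDl ?exprn_even_gt0 //.
  by apply: sumr_ge0 => i _; exact: sqr_ge0.
have quad : lam * s = \sum_t wt t * (\sum_a u 0 a * l t a) ^+ 2.
  transitivity (\sum_b (u *m H) 0 b * u 0 b).
    by rewrite uH /s mulr_sumr; apply: eq_bigr => b _; rewrite mxE expr2 mulrA.
  transitivity (\sum_b \sum_a \sum_t wt t * ((u 0 a * l t a) * (u 0 b * l t b))).
    apply: eq_bigr => b _; rewrite mxE mulr_suml; apply: eq_bigr => a _.
    by rewrite HE mulr_sumr mulr_suml; apply: eq_bigr => t _; ring.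
  rewrite exchange_big /=; under eq_bigr do rewrite exchange_big /=.
  rewrite exchange_big /=; apply: eq_bigr => t _.
  rewrite expr2 mulr_suml mulr_sumr; apply: eq_bigr => a _.
  by rewrite !mulr_sumr; apply: eq_bigr => b _; ring.
rewrite -(ler_pM2r s_gt0) quad.
apply: le_trans (_ : _ <= \sum_(t < n) W * (N%:R * K ^+ 2 * s)) _.
  apply: ler_sum => t _; have /andP[wt_ge0 wt_le] := wtW t.
  by rewrite ler_pM ?sqr_ge0 ?sqr_dot_le.
rewrite sumr_const card_ord -[_ *+ n]mulr_natl le_eqVlt; apply/orP; left.
by apply/eqP; ring.
Qed.

End gram_eigenvalue.

Theorem propositionB1 (R : realType) (p k1 k2 n : nat)
  (X : set (p.-tuple R))
  (hXmeas : measurable X)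
  (hXbdd : exists B : R, forall x, X x -> forall i, `|tnth x i| <= B)
  (hXvol : (0 < volume X < +oo)%E)
  (Phi : p.-tuple R -> 'M[R]_(k1, k2))
  (hPhimeas : forall i j, measurable_fun X (fun x => Phi x i j))
  (Rn : 'M[R]_(k1, k2) -> R) (hRn : is_norm Rn)
  (r d phimax : R) (Theta_star : 'M[R]_(k1, k2))
  (xs : 'I_n -> p.-tuple R) (hn : (0 < n)%N) (hxs : forall t, X (xs t))
  (hstar : Rn Theta_star <= r)
  (hd : forall x, X x -> dual_norm Rn (Phi x) <= d)
  (hphi : forall x, X x -> maxnorm (Phi x) <= phimax)
  (rbar : R) (hrbar : 0 < rbar) :
  forall Theta : 'M[R]_(k1, k2), Rn Theta <= rbar ->
  forall lambda : R,
    eigenvalue (hessian (fun v => Ln X Phi xs (vec_mx v)) (mxvec Theta)) lambda ->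
    lambda <= 4 * (k1 * k2)%:R * phimax ^+ 2 * expR (2 * rbar * d).
Proof.
move=> Theta Theta_rbar lam.
have volX_gt0 := proj1 (andP hXvol).
have Phi_entry x : X x -> forall i j, `|Phi x i j| <= phimax.
  by move=> Xx i j; apply: le_trans (hphi x Xx); exact: mx_entry_le_maxnorm.
have frob_Phi x : X x -> `|frob Theta (Phi x)| <= rbar * d.
  move=> Xx; apply: le_trans (normr_frob_le hRn _ _) _.
  by rewrite ler_pM ?hd ?dual_norm_ge0 //; case: hRn.
pose Ps t := Phi_tilde X Phi (xs t).
have weight t : 0 <= n%:R^-1 * expR (- frob_vec (Ps t) (mxvec Theta)) <=
    n%:R^-1 * expR (2 * rbar * d).
  rewrite mulr_ge0 ?invr_ge0 ?expR_ge0 //= ler_wpM2l ?invr_ge0 // ler_expR.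
  rewrite /frob_vec mxvecK -mulrA lerNl; apply: lerNnormlW.
  exact: normr_frob_Phi_tilde_le hXmeas hXbdd volX_gt0 hPhimeas Phi_entry _ _ _ (hxs t) frob_Phi.
have Ps_entry t a : `|mxvec (Ps t) 0 a| <= 2 * phimax.
  case/mxvec_indexP: a => i j; rewrite mxvecE.
  exact: Phi_tilde_entry_le hXmeas hXbdd volX_gt0 hPhimeas Phi_entry _ _ _ (hxs t).
rewrite (_ : (fun v => _) = exp_sum (fun _ => n%:R^-1) Ps) => [lam_eig|]; last first.
  by apply/funext => v; rewrite /Ln /exp_sum mulr_sumr.
have -> : 4 * (k1 * k2)%:R * phimax ^+ 2 * expR (2 * rbar * d) =
    n%:R * (k1 * k2)%:R * (2 * phimax) ^+ 2 * (n%:R^-1 * expR (2 * rbar * d)).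
  by field; rewrite pnatr_eq0 -lt0n.
exact: eigenvalue_gram_le (hessian_exp_sum _ _ _) weight Ps_entry lam_eig.
Qed.
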